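(* Let $0<p,q\le\infty$ and let $g$ be an entire function such that the Volterra-type integral operator $V_g:\mathcal{F}_p\to\mathcal{F}_q$ is compact. Then $V_g$ and $V_{g(0)}$ (the Volterra-type integral operator induced by the constant function $g(0)$) belong to the same path connected component of the space $\mathbf{V}(\mathcal{F}_p,\mathcal{F}_q)$.
   Context: For $0<p<\infty$, the Fock space $\mathcal{F}_p$ consists of entire functions $f$ on $\mathbb{C}$ with $\|f\|_p^p=\frac{p}{2\pi}\int_{\mathbb{C}}|f(z)|^pe^{-\frac p2|z|^2}\,dA(z)<\infty$, where $dA$ is Lebesgue area measure; $\mathcal{F}_\infty$ consists of entire $f$ with $\|f\|_\infty=\sup_{z\in\mathbb{C}}|f(z)|e^{-\frac12|z|^2}<\infty$. For an entire function $g$, the Volterra-type integral operator is $V_gf(z)=\int_0^z f(w)g'(w)\,dw$. $\mathbf{V}(\mathcal{F}_p,\mathcal{F}_q)$ denotes the set of all bounded operators $V_g:\mathcal{F}_p\to\mathcal{F}_q$ ($g$ entire), equipped with the operator norm topology. *)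

(* Complex numbers are mathcomp-real-closed's
   R[i] over an arbitrary R : realType; we use the regular copy (R[i])^o so
   that MathComp-Analysis equips it with its normed-module structure over
   the field R[i] itself, which makes [derivable f z 1] *complex*
   differentiability. *)
From mathcomp Require Import all_boot all_order all_algebra.
From mathcomp Require Import all_classical all_reals all_analysis.
From mathcomp.real_closed Require Import complex.

Set Implicit Arguments.
Unset Strict Implicit.
Unset Printing Implicit Defensive.

Import Order.TTheory GRing.Theory Num.Theory.
Local Open Scope classical_set_scope.
Local Open Scope ring_scope.
Local Open Scope complex_scope.

Definition CC (R : realType) := (R[i])^o.

Definition entire (R : realType) (f : CC R -> CC R) : Prop :=
  forall z : CC R, derivable f z 1.

Definition cderiv (R : realType) (g : CC R -> CC R) : CC R -> CC R :=
  derive1 g.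

Definition cabs (R : realType) (z : R[i]) : R :=
  Num.sqrt (complex.Re z ^+ 2 + complex.Im z ^+ 2).

Definition cpt (R : realType) (xy : R * R) : CC R := xy.1 +i* xy.2.

Definition fock_int (R : realType) (p : R) (f : CC R -> CC R) : \bar R :=
  (\int[(@lebesgue_measure R) \x (@lebesgue_measure R)]_(xy in setT)
     ((cabs (f (cpt xy))) `^ p
        * expR (- (p / 2) * (cabs (cpt xy)) ^+ 2))%:E)%E.

(* the Fock (quasi-)norm ||f||_p, 0 < p <= +oo, valued in \bar R
   (value +oo means f is not in F_p). The case -oo is never used. *)
Definition fock_norm (R : realType) (p : \bar R) (f : CC R -> CC R) : \bar R :=
  match p with
  | r%:E => poweR ((r / (2 * pi))%:E * fock_int r f)%E r^-1
  | +oo%E => ereal_sup [set (cabs (f z) * expR (- (cabs z) ^+ 2 / 2))%:E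
                         | z in [set: CC R]]
  | -oo%E => 0%E
  end.

Definition in_fock (R : realType) (p : \bar R) (f : CC R -> CC R) : Prop :=
  entire f /\ (fock_norm p f < +oo)%E.

(* Volterra-type integral operator
   V_g f (z) = \int_0^z f(w) g'(w) dw, the integral taken along the segment
   [0, z], i.e. = \int_0^1 f(t z) g'(t z) z dt (real and imaginary parts
   integrated separately against Lebesgue measure on [0,1]). *)
Definition volterra (R : realType) (g f : CC R -> CC R) : CC R -> CC R :=
  fun z =>
    let F := fun t : R => (f (t%:C * z) * cderiv g (t%:C * z) * z : R[i]) in
    (Rintegral (@lebesgue_measure R) `[0%R, 1%R] (fun t => complex.Re (F t)))
    +i* (Rintegral (@lebesgue_measure R) `[0%R, 1%R] (fun t => complex.Im (F t))).

Definition vdist (R : realType) (p q : \bar R) (g1 g2 : CC R -> CC R) : \bar R :=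
  ereal_sup [set fock_norm q (fun z => volterra g1 f z - volterra g2 f z)
            | f in [set f | entire f /\ (fock_norm p f <= 1)%E]].

Definition vnorm (R : realType) (p q : \bar R) (g : CC R -> CC R) : \bar R :=
  ereal_sup [set fock_norm q (volterra g f)
            | f in [set f | entire f /\ (fock_norm p f <= 1)%E]].

Definition vbounded (R : realType) (p q : \bar R) (g : CC R -> CC R) : Prop :=
  (vnorm p q g < +oo)%E.

Definition vcompact (R : realType) (p q : \bar R) (g : CC R -> CC R) : Prop :=
  forall f : nat -> CC R -> CC R,
    (forall n, entire (f n)) ->
    (exists M : R, forall n, (fock_norm p (f n) <= M%:E)%E) ->
    exists phi : nat -> nat, (forall k, (phi k < phi k.+1)%N) /\
      exists F : CC R -> CC R, in_fock q F /\
        ((fun k => fock_norm q (fun z => volterra g (f (phi k)) z - F z))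
           @ \oo --> 0%E).

From mathcomp Require Import all_boot all_order all_algebra.
From mathcomp Require Import all_classical all_reals all_analysis.
From mathcomp.real_closed Require Import complex.

Set Implicit Arguments.
Unset Strict Implicit.
Unset Printing Implicit Defensive.
Import Order.TTheory GRing.Theory Num.Theory.
Local Open Scope classical_set_scope.
Local Open Scope ring_scope.

(* V_g depends on g only through g', so g |-> V_g is real-affine:
   V_(c g + b) = c V_g for real c.  Along h t = (1 - t) g + t g(0) we thus get
   V_(h t) = (1 - t) V_g, hence ||V_(h t) - V_(h s)|| <= |t - s| ||V_g||, and
   the segment joins V_g to V_(g(0)) = 0 continuously.  The one technical point is pulling a real constant out of the
   Lebesgue integrals defining V_g, whose integrands are not known to be
   measurable. *)

Section integral_scaling.
Import HBNNSimple.
Context d (T : measurableType d) (R : realType).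
Variable mu : {measure set T -> \bar R}.
Local Open Scope ereal_scope.

(* [ge0_integralE] unfolds a nonnegative integral to this supremum, which
   scales without any measurability assumption. *)
Definition sup_sintegral (F : T -> \bar R) : \bar R :=
  ereal_sup [set sintegral mu h |
    h in [set h : {nnsfun T >-> R} | forall x, (h x)%:E <= F x]].

Lemma ge0_integral_sup_sintegral D f : (forall x, D x -> 0 <= f x) ->
  \int[mu]_(x in D) f x = sup_sintegral (f \_ D).
Proof. exact: ge0_integralE. Qed.

Lemma sup_sintegralZl_le (k : R) F : (0 < k)%R ->
  sup_sintegral (fun x => k%:E * F x) <= k%:E * sup_sintegral F.
Proof.
move=> k0; apply: ge_ereal_sup => _ [h hF <-].
have k'0 : (0 <= k^-1)%R by rewrite invr_ge0 ltW.
pose h' := scale_nnsfun h k'0.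
rewrite (eq_sintegral (cst k \* h')%R); last first.
  by move=> x /=; rewrite mulrA mulfV ?gt_eqF // mul1r.
rewrite sintegralrM; apply: lee_wpmul2l; first by rewrite lee_fin ltW.
apply: ereal_sup_ubound; exists h' => // x /=.
rewrite -[F x]mul1e -(@mulVf _ k) ?gt_eqF // !EFinM -muleA.
by apply: lee_wpmul2l; rewrite ?lee_fin.
Qed.

Lemma sup_sintegralZl (k : R) F : (0 < k)%R ->
  sup_sintegral (fun x => k%:E * F x) = k%:E * sup_sintegral F.
Proof.
move=> k0; apply/eqP; rewrite eq_le sup_sintegralZl_le //=.
have k'0 : (0 < k^-1)%R by rewrite invr_gt0.
have := @sup_sintegralZl_le k^-1 (fun x => k%:E * F x) k'0.
under eq_fun do rewrite muleA -EFinM mulVf ?gt_eqF // mul1e.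
by rewrite lee_pdivlMl.
Qed.

Lemma ge0_integralZl_EFin_nonmeasurable D f (k : R) : (0 <= k)%R ->
  (forall x, D x -> 0 <= f x) ->
  \int[mu]_(x in D) (k%:E * f x) = k%:E * \int[mu]_(x in D) f x.
Proof.
move=> k0 f0; have [->|k_neq0] := eqVneq k 0%R.
  by under eq_integral do rewrite mul0e; rewrite integral0 mul0e.
have kgt0 : (0 < k)%R by rewrite lt_neqAle eq_sym k_neq0.
rewrite !ge0_integral_sup_sintegral //; last first.
  by move=> x Dx; rewrite mule_ge0 ?lee_fin ?f0.
by rewrite erestrict_scale sup_sintegralZl.
Qed.

End integral_scaling.

Section fine_sub.
Context (R : realType).
Local Open Scope ereal_scope.
Implicit Types a b : \bar R.

Lemma fineZB_ge0 (c : R) a b : (0 <= c)%R -> 0 <= a -> 0 <= b ->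
  fine (c%:E * a - c%:E * b) = (c * fine (a - b))%R.
Proof.
move=> c0; have [->|c_neq0] := eqVneq c 0%R.
  by rewrite !mul0e subee // mul0r.
have cgt0 : (0 < c)%R by rewrite lt_neqAle eq_sym c_neq0.
case: a b => [a| |] // [b| |] // _ _ /=;
  rewrite ?gt0_muley ?lte_fin //= ?mulr0 //.
by rewrite mulrBr.
Qed.

Lemma fineBC_ge0 a b : 0 <= a -> 0 <= b -> fine (b - a) = (- fine (a - b))%R.
Proof. by case: a b => [a| |] // [b| |] // _ _ /=; rewrite ?oppr0 ?opprB. Qed.

End fine_sub.

(* Only true after [fine]: for c < 0 and both halves of the integral infinite,
   the extended integrals are -oo and +oo. *)
Lemma RintegralZl_nonmeasurable d (T : measurableType d) (R : realType)
    (mu : {measure set T -> \bar R}) D (f : T -> R) (c : R) :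
  \int[mu]_(x in D) (c * f x) = c * \int[mu]_(x in D) f x.
Proof.
rewrite /Rintegral; under eq_integral do rewrite EFinM.
rewrite integralE [X in _ = (_ * fine X)%R]integralE.
have pos0 : (0 <= \int[mu]_(x in D) (fun x => (f x)%:E)^\+ x)%E.
  by apply: integral_ge0 => x _; exact: funepos_ge0.
have neg0 : (0 <= \int[mu]_(x in D) (fun x => (f x)%:E)^\- x)%E.
  by apply: integral_ge0 => x _; exact: funeneg_ge0.
have [c0|c0] := leP 0%R c.
  rewrite ge0_funeposM // ge0_funenegM //.
  by rewrite !ge0_integralZl_EFin_nonmeasurable // fineZB_ge0.
have Nc0 : (0 <= - c)%R by rewrite oppr_ge0 ltW.
rewrite le0_funeposM ?ltW // le0_funenegM ?ltW // -!EFinN.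
rewrite !ge0_integralZl_EFin_nonmeasurable //.
by rewrite fineZB_ge0 // fineBC_ge0 // mulrNN.
Qed.

Local Open Scope complex_scope.

Section affine_image.
Context (R : realType).
Implicit Types (g f : CC R -> CC R) (a b : CC R).

Lemma is_derive_affine g a b z : derivable g z 1 ->
  is_derive z (1 : CC R) (fun w => a * g w + b) (a * 'D_1 g z).
Proof.
move=> /derivableP dg; rewrite -[X in is_derive _ _ _ X]addr0.
exact: is_deriveD (is_deriveZ a dg) (is_derive_cst b z 1).
Qed.

Lemma entire_affine g a b : entire g -> entire (fun w => a * g w + b).
Proof.
by move=> eg z; exact: (@ex_derive _ _ _ _ _ _ _ (is_derive_affine a b (eg z))).
Qed.

Lemma cderiv_affine g a b z : derivable g z 1 ->
  cderiv (fun w => a * g w + b) z = a * cderiv g z.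
Proof.
move=> dg; rewrite /cderiv !derive1E.
exact: (@derive_val _ _ _ _ _ _ _ (is_derive_affine a b dg)).
Qed.

End affine_image.

Section volterra_linear.
Context (R : realType).
Implicit Types (g f : CC R -> CC R) (c : R) (w : R[i]).

Lemma ReZ c w : complex.Re (c%:C * w) = c * complex.Re w.
Proof. by case: w => x y /=; rewrite mul0r subr0. Qed.

Lemma ImZ c w : complex.Im (c%:C * w) = c * complex.Im w.
Proof. by case: w => x y /=; rewrite mul0r addr0. Qed.

Lemma complexZ c (x y : R) : (c * x) +i* (c * y) = c%:C * (x +i* y).
Proof.
have -> : c%:C * (x +i* y) =
    complex.Re (c%:C * (x +i* y)) +i* complex.Im (c%:C * (x +i* y)).
  by case: (_ * _).
by rewrite ReZ ImZ.
Qed.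

Lemma volterra_affine g f c (b : CC R) : entire g ->
  volterra (fun w => c%:C * g w + b) f = (fun z => c%:C * volterra g f z).
Proof.
move=> eg; apply/funext => z.
rewrite /volterra -complexZ -!RintegralZl_nonmeasurable.
have integrandZ t :
    f (t%:C * z) * cderiv (fun w => c%:C * g w + b) (t%:C * z) * z
    = c%:C * (f (t%:C * z) * cderiv g (t%:C * z) * z).
  by rewrite cderiv_affine // mulrCA !mulrA.
congr (_ +i* _); congr Rintegral; apply/funext => t.
- by rewrite -ReZ; congr complex.Re; exact: integrandZ.
- by rewrite -ImZ; congr complex.Im; exact: integrandZ.
Qed.

Lemma volterra_cst f (b : CC R) : volterra (fun _ => b) f = (fun _ => 0).
Proof.
have -> : (fun _ => b) = (fun w => (0 : R)%:C * cst b w + b).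
  by apply/funext => w; rewrite mul0r add0r.
rewrite volterra_affine; last by move=> z; exact: derivable_cst.
by apply/funext => z; rewrite mul0r.
Qed.

End volterra_linear.

Section fock_norm_scaling.
Context (R : realType).

Lemma cabsZ (c : R) (w : R[i]) : cabs (c%:C * w) = `|c| * cabs w.
Proof.
by rewrite /cabs ReZ ImZ !exprMn -mulrDr sqrtrM ?sqr_ge0 // sqrtr_sqr.
Qed.

Local Open Scope ereal_scope.

Lemma fock_int_ge0 (r : R) (G : CC R -> CC R) : 0 <= fock_int r G.
Proof.
by apply: integral_ge0 => xy _; rewrite lee_fin mulr_ge0 ?powR_ge0 ?expR_ge0.
Qed.

Lemma fock_intZ (r : R) (c : R) (G : CC R -> CC R) :
  fock_int r (fun z => c%:C * G z)%R = (`|c| `^ r)%:E * fock_int r G.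
Proof.
rewrite /fock_int -ge0_integralZl_EFin_nonmeasurable ?powR_ge0 //; last first.
  by move=> xy _; rewrite lee_fin mulr_ge0 ?powR_ge0 ?expR_ge0.
apply: eq_integral => xy _.
by rewrite cabsZ powRM ?normr_ge0 ?sqrtr_ge0 // -mulrA EFinM.
Qed.

Lemma fock_normZ_le (q : \bar R) (c : R) (G : CC R -> CC R) : 0 < q ->
  fock_norm q (fun z => c%:C * G z)%R <= `|c|%:E * fock_norm q G.
Proof.
case: q => [r| |] // r_gt0.
- have rf0 : 0 <= (r / (2 * pi))%:E * fock_int r G.
    rewrite mule_ge0 ?fock_int_ge0 // lee_fin.
    by rewrite divr_ge0 ?ltW ?mulr_gt0 ?pi_gt0.
  rewrite /fock_norm fock_intZ muleCA (poweRM _ _ rf0) ?lee_fin ?powR_ge0 //.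
  by rewrite poweR_EFin -powRrM mulfV ?gt_eqF // powRr1.
- apply: ge_ereal_sup => _ [z _ <-].
  rewrite cabsZ -mulrA EFinM lee_wpmul2l //.
  by apply: ereal_sup_ubound; exists z.
Qed.

End fock_norm_scaling.

Section volterra_affine_norms.
Context (R : realType) (p q : \bar R) (g : CC R -> CC R).
Hypotheses (q_gt0 : (0 < q)%E) (eg : entire g).
Local Open Scope ereal_scope.

Lemma vnorm_affine_le (c : R) (b : CC R) :
  vnorm p q (fun w => c%:C * g w + b)%R <= `|c|%:E * vnorm p q g.
Proof.
apply: ge_ereal_sup => _ [f Bf <-]; rewrite volterra_affine //.
apply: le_trans (fock_normZ_le _ _ q_gt0) _; apply: lee_wpmul2l => //.
by apply: ereal_sup_ubound; exists f.
Qed.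

Lemma vdist_affine_le (c1 c2 : R) (b1 b2 : CC R) :
  vdist p q (fun w => c1%:C * g w + b1)%R (fun w => c2%:C * g w + b2)%R
    <= `|c1 - c2|%:E * vnorm p q g.
Proof.
apply: ge_ereal_sup => _ [f Bf <-]; rewrite !volterra_affine //.
under eq_fun do rewrite -mulrBl -rmorphB.
apply: le_trans (fock_normZ_le _ _ q_gt0) _; apply: lee_wpmul2l => //.
by apply: ereal_sup_ubound; exists f.
Qed.

End volterra_affine_norms.

Lemma norm_mule_lt_small (R : realType) (M : \bar R) : (M < +oo)%E ->
  forall eps : R, 0 < eps -> exists2 delta : R, 0 < delta &
    forall x : R, `|x| < delta -> (`|x|%:E * M < eps%:E)%E.
Proof.
case: M => [m| |] // _ eps eps_gt0.
- exists (eps / (`|m| + 1)); first by rewrite divr_gt0 // ltr_wpDl.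
  move=> x x_lt; rewrite -EFinM lte_fin.
  apply: (@le_lt_trans _ _ (`|x| * (`|m| + 1))).
    by rewrite ler_wpM2l // (le_trans (ler_norm m)) // lerDl.
  by rewrite -ltr_pdivlMr ?ltr_wpDl.
- exists 1 => // x _; have [->|x_neq0] := eqVneq x 0.
    by rewrite normr0 mul0e lte_fin.
  by rewrite gt0_muleNy ?ltNyr // lte_fin normr_gt0.
Qed.

Definition segment_to_cst (R : realType) (g : CC R -> CC R) (t : R) :
    CC R -> CC R :=
  fun w => (1 - t)%:C * g w + t%:C * g 0.

Theorem theorem2p1 (R : realType) (p q : \bar R) (g : CC R -> CC R) :
  (0 < p)%E -> (0 < q)%E -> entire g ->
  vbounded p q g -> vcompact p q g ->
  exists h : R -> CC R -> CC R,
    (forall t : R, 0 <= t <= 1 -> entire (h t) /\ vbounded p q (h t)) /\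
    (forall f : CC R -> CC R, in_fock p f ->
       volterra (h 0) f = volterra g f /\
       volterra (h 1) f = volterra (fun _ => g 0) f) /\
    (forall t0 : R, 0 <= t0 <= 1 ->
       forall eps : R, 0 < eps ->
       exists2 delta : R, 0 < delta &
         forall t : R, 0 <= t <= 1 -> `|t - t0| < delta ->
           (vdist p q (h t) (h t0) < eps%:E)%E).
Proof.
move=> _ q_gt0 eg g_bdd _; exists (segment_to_cst g); split; [|split].
- move=> t _; split; first exact: entire_affine.
  apply: le_lt_trans (vnorm_affine_le _ q_gt0 eg _ _) _.
  by rewrite lte_mul_pinfty ?lee_fin.
- move=> f _; rewrite !volterra_affine // volterra_cst.
  rewrite subr0 subrr rmorph1 rmorph0.
  by split; apply/funext => z; rewrite ?mul1r ?mul0r.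
- move=> t0 _ eps eps_gt0.
  have [delta delta_gt0 small] := norm_mule_lt_small g_bdd eps_gt0.
  exists delta => // t _ /small; apply: le_lt_trans.
  apply: le_trans (vdist_affine_le _ q_gt0 eg _ _ _ _) _.
  by rewrite opprB addrC addrA subrK distrC.
Qed.
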